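(* Let $d$ be even and let $A$ be a concave linear Nakayama algebra which is a higher Auslander algebra of global dimension $d$. Let $I$ be an indecomposable injective, non-projective $A$-module of length $m\ge2$. Then $\operatorname{pd}I=d$ and $I$ is plus-strictly-increasing; explicitly, $\operatorname{char}I=(d,c_2,\dots,c_m)$ with $c_2<c_3<\cdots<c_m<d$ odd numbers.
   Context: Conventions: $k$ a field; linear Nakayama algebras are basic $kQ/I$ with $Q$ a linearly oriented path; modules finitely generated left, indecomposables uniserial. Even/odd indecomposable: parity of $\operatorname{pd}$. For indecomposable $M$ with composition factors $F_1=\operatorname{soc}M,\dots,F_m=\operatorname{top}M$, $\operatorname{char}M=(z_1,\dots,z_m)$ with $z_i=\operatorname{pd}F_i$ if $F_i$ odd, $z_i=\operatorname{pd}M$ if $F_i$ even. Concave: Kupisch series weakly increasing then weakly decreasing. Higher Auslander algebra: global dimension = dominant dimension. An indecomposable module $Y$ is plus-strictly-increasing if $\operatorname{char}Y=(e,c_2,\dots,c_m)$ with $e$ even and $c_2<\cdots<c_m<e$ odd. *)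

(* Combinatorial model of the module category of a
   linear Nakayama algebra A = kQ/I (Q linearly oriented path, I admissible),
   which is independent of the field k.

   Vertices/simples are 0 .. n-1.  The Kupisch series is c = [:: c_0; ...; c_{n-1}],
   c_i = length of the indecomposable projective P_i (top S_i, composition
   factors S_i, S_{i+1}, ..., S_{i+c_i-1} from top to socle).
   Every indecomposable (uniserial) module is M(t,l) = P_t / rad^l P_t, encoded
   as the pair (t,l) with t < n and 1 <= l <= c_t: top S_t, socle S_{t+l-1},
   length l. *)
From mathcomp Require Import all_boot.
Set Implicit Arguments.
Unset Strict Implicit.
Unset Printing Implicit Defensive.

Definition kup (c : seq nat) (i : nat) : nat := nth 0 c i.

Definition kupisch_series (c : seq nat) : bool :=
  [&& 0 < size c, last 0 c == 1,
      all (fun i => 2 <= kup c i) (iota 0 (size c).-1) &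
      all (fun i => (kup c i).-1 <= kup c i.+1) (iota 0 (size c).-1)].

Definition concave (c : seq nat) : Prop :=
  exists k, (forall i j, i <= j -> j <= k -> j < size c -> kup c i <= kup c j) /\
            (forall i j, k <= i -> i <= j -> j < size c -> kup c j <= kup c i).

Definition module := (nat * nat)%type.   (* (top, length) *)

Definition valid (c : seq nat) (M : module) : bool :=
  (M.1 < size c) && (0 < M.2 <= kup c M.1).

Definition mlength (M : module) : nat := M.2.

Definition is_proj (c : seq nat) (M : module) : bool := M.2 == kup c M.1.

(* M is injective iff it is not a proper submodule of an indecomposable,
   i.e. M(t-1, l+1) does not exist *)
Definition is_inj (c : seq nat) (M : module) : bool :=
  (M.1 == 0) || (kup c M.1.-1 <= M.2).

(* syzygy (kernel of the projective cover P_t -> M(t,l)); None = zero module *)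
Definition omega (c : seq nat) (M : module) : option module :=
  if M.2 < kup c M.1 then Some (M.1 + M.2, kup c M.1 - M.2) else None.

Definition omega_opt (c : seq nat) (o : option module) : option module :=
  if o is Some M then omega c M else None.

Definition syz (c : seq nat) (k : nat) (M : module) : option module :=
  iter k (omega_opt c) (Some M).

(* projective dimension: least k with Omega^{k+1} M = 0.  If pd M is finite,
   the modules M, Omega M, ..., Omega^{pd M} M are pairwise distinct nonzero
   indecomposables, so pd M < sumn c (the number of indecomposables); hence the
   bounded search below returns the true pd whenever it is finite. *)
Definition pd (c : seq nat) (M : module) : nat :=
  find (fun k => syz c k.+1 M == None) (iota 0 (sumn c)).

Definition gldim_eq (c : seq nat) (d : nat) : Prop :=
  (forall M, valid c M -> syz c d.+1 M = None) /\
  (exists M, valid c M /\ syz c d M <> None).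

(* top of the indecomposable injective I_s with socle S_s: least t with
   M(t, s-t+1) existing, i.e. s < t + c_t *)
Definition inj_top (c : seq nat) (s : nat) : nat :=
  find (fun t => s < t + kup c t) (iota 0 s.+1).

Definition env (c : seq nat) (M : module) : module :=
  let s := (M.1 + M.2).-1 in (inj_top c s, s.+1 - inj_top c s).

Definition cosyz (c : seq nat) (M : module) : option module :=
  let t' := inj_top c (M.1 + M.2).-1 in
  if t' < M.1 then Some (t', M.1 - t') else None.

Definition cosyz_opt (c : seq nat) (o : option module) : option module :=
  if o is Some M then cosyz c M else None.

Definition cosyz_iter (c : seq nat) (k : nat) (M : module) : option module :=
  iter k (cosyz_opt c) (Some M).

(* dominant dimension of A is >= k: for every indecomposable projective P_i,
   the terms I^0, ..., I^{k-1} of its minimal injective coresolution are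
   projective (I^j = injective envelope of the j-th cosyzygy; zero terms are
   trivially projective) *)
Definition domdim_ge (c : seq nat) (k : nat) : Prop :=
  forall i, i < size c -> forall j, j < k ->
    match cosyz_iter c j (i, kup c i) with
    | None => true
    | Some N => is_proj c (env c N)
    end.

Definition higher_auslander (c : seq nat) (d : nat) : Prop :=
  gldim_eq c d /\ domdim_ge c d /\ ~ domdim_ge c d.+1.

Definition simple (v : nat) : module := (v, 1).

(* char M = (z_1, ..., z_m), F_1 = soc M = S_{t+l-1}, ..., F_m = top M = S_t;
   F_i = S_{t+l-i}.  z_i = pd F_i if F_i odd, z_i = pd M if F_i even. *)
Definition charz (c : seq nat) (M : module) : seq nat :=
  [seq (if odd (pd c (simple (M.1 + M.2 - i))) then pd c (simple (M.1 + M.2 - i))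
        else pd c M) | i <- iota 1 M.2].

Definition plus_strictly_increasing (c : seq nat) (Y : module) : bool :=
  let z := charz c Y in
  [&& ~~ odd (head 0 z), all odd (behead z), sorted ltn (behead z) &
      all (fun x => x < head 0 z) (behead z)].

From mathcomp Require Import all_boot zify.
Set Implicit Arguments.
Unset Strict Implicit.
Unset Printing Implicit Defensive.

(* Encode the indecomposable M(t, l) as the interval [t, t + l) of vertices.  Let
   g x = x + c_x be the end of the projective P_x = [x, g x) and h the lower adjoint
   of the non-decreasing g (h b <= y iff b <= g y), so that [h b, b) is the injective
   envelope of every interval ending at b.  The syzygies of [p, q) are the intervals
   between consecutive terms of p, q, g p, g q, g^2 p, ... as long as these increase,
   and the cosyzygies of P_x those between consecutive terms of g x, x, h (g x), h x, ...

   Let P_x be non-injective, i.e. g (x - 1) = g x, with coresolution w.  Dominant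
   dimension d makes the first d envelopes projective, g w_(k+2) = w_k, hence w
   decreases strictly down to w_(d+1); global dimension d makes [w_(d+1), w_d)
   injective, and its syzygy sequence retraces w, so its projective dimension is d.
   As d = 2r, g^r w_(d+1) = x, so x |-> w_d is injective; non-injective projectives and
   non-projective injectives are equinumerous (both count the repetitions of g), so
   every I arises this way.  For S_j in I = [w_(d+1), w_d), the iterates of j and
   j + 1 under g meet after d steps if j + 1 = w_d and otherwise after an odd number
   2m + 1 < d of steps, which is pd S_j.  These meeting times decrease strictly in j:
   otherwise the coresolutions of the two merging points would put a point strictly
   between w_d and w_(d-1) of a coresolution, where h is constant and g h fixes both
   ends. *)

Lemma size_le_sumn s : all (leq 1) s -> size s <= sumn s.
Proof. by elim: s => //= x s IH /andP [x_gt0 /IH]; lia. Qed.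

Lemma even_or_odd i : exists m, i = m.*2 \/ i = m.*2.+1.
Proof.
exists i./2; have := odd_double_half i; case: (odd i) => /= <-; [right | left]; lia.
Qed.

Lemma find_iota0 (P : pred nat) N k :
  k < N -> P k -> (forall i, i < k -> ~~ P i) -> find P (iota 0 N) = k.
Proof.
move=> lt_kN Pk before_k.
have hasP : has P (iota 0 N) by apply/hasP; exists k; rewrite ?mem_iota.
have lt_find : find P (iota 0 N) < N by rewrite -[X in _ < X](size_iota 0) -has_find.
have := nth_find 0 hasP; rewrite nth_iota // add0n => Pfind.
case: (ltngtP (find P (iota 0 N)) k) => // [/before_k | /(before_find 0)]; first by rewrite Pfind.
by rewrite nth_iota // add0n Pk.
Qed.

Lemma sorted_ltn_map_iota (f : nat -> nat) a k :
  (forall i, a <= i -> i.+1 < a + k -> f i < f i.+1) ->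
  sorted ltn [seq f i | i <- iota a k].
Proof.
elim: k a => [//|[//|k] IH] a f_incr /=.
rewrite f_incr; [|lia|lia].
by apply: (IH a.+1) => i le_i lt_i; apply: f_incr; lia.
Qed.

Section Kupisch.

Variable c : seq nat.
Hypothesis kupisch : kupisch_series c.

Local Notation n := (size c).

Definition proj_end x := x + kup c x.
Definition inj_start b := inj_top c b.-1.

Local Notation g := proj_end.
Local Notation h := inj_start.

Lemma size_gt0 : 0 < n.
Proof. by case/and4P: kupisch. Qed.

Lemma kup_last : kup c n.-1 = 1.
Proof. by case/and4P: kupisch => _ /eqP last1 _ _; rewrite /kup nth_last. Qed.

Lemma kup_ge2 i : i < n.-1 -> 2 <= kup c i.
Proof. by case/and4P: kupisch => _ _ /allP ge2 _ lt_in; apply: ge2; rewrite mem_iota. Qed.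

Lemma kup_step i : i < n.-1 -> (kup c i).-1 <= kup c i.+1.
Proof. by case/and4P: kupisch => _ _ _ /allP step lt_in; apply: (step i); rewrite mem_iota. Qed.

Lemma kup_gt0 i : i < n -> 0 < kup c i.
Proof.
move=> lt_in; case: (ltnP i n.-1) => [/kup_ge2 | le_ni]; first lia.
have -> : i = n.-1 by lia.
by rewrite kup_last.
Qed.

Lemma kup_out i : n <= i -> kup c i = 0.
Proof. by move=> le_ni; rewrite /kup nth_default. Qed.

Lemma proj_end_mono : {homo g : x y / x <= y}.
Proof.
apply: homo_leq => [//|y x z|x]; first exact: leq_trans.
rewrite /g; case: (ltnP x n.-1) => [lt_x | le_x].
  by have := kup_step lt_x; have := kup_ge2 lt_x; lia.
rewrite (kup_out (i := x.+1)); last lia.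
case: (ltnP x n) => [lt_xn | /kup_out->]; last lia.
have -> : x = n.-1 by lia.
by rewrite kup_last; lia.
Qed.

Lemma proj_end_gt x : x < n -> x < g x.
Proof. by move/kup_gt0; rewrite /g; lia. Qed.

Lemma leq_proj_end x : x <= g x.
Proof. exact: leq_addr. Qed.

Lemma proj_end_le x : x <= n -> g x <= n.
Proof.
move=> le_xn; case: (ltnP x n) => [lt_xn | le_nx]; last first.
  by rewrite /g kup_out; lia.
apply: leq_trans (proj_end_mono (_ : x <= n.-1)) _; first lia.
by rewrite /g kup_last; have := size_gt0; lia.
Qed.

Lemma iter_proj_end_mono k : {homo iter k g : x y / x <= y}.
Proof. by elim: k => //= k IH x y /IH /proj_end_mono. Qed.

Lemma iter_proj_end_le k x : x <= n -> iter k g x <= n.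
Proof. by elim: k => //= k IH /IH /proj_end_le. Qed.

Lemma inj_start_leqE b y : 0 < b <= n -> (h b <= y) = (b <= g y).
Proof.
move=> /andP [b_gt0 le_bn]; rewrite /h /inj_top.
set P := fun t => b.-1 < t + kup c t.
have hasP : has P (iota 0 b.-1.+1).
  by apply/hasP; exists b.-1; rewrite ?mem_iota /P -/(g _) ?proj_end_gt; lia.
have lt_find : find P (iota 0 b.-1.+1) < b.-1.+1.
  by rewrite -[X in _ < X](size_iota 0) -has_find.
have := nth_find 0 hasP; rewrite nth_iota // add0n /P -/(g _) => Pfind.
apply/idP/idP => [le_fy | le_bgy]; first by have := proj_end_mono le_fy; lia.
rewrite leqNgt; apply/negP => lt_yf; have := before_find 0 lt_yf.
by rewrite nth_iota ?add0n /P -/(g _); [move/negbT; lia | exact: ltn_trans lt_find].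
Qed.

Lemma inj_start_lt b : 0 < b <= n -> h b < b.
Proof.
move=> b_range; suff : h b <= b.-1 by lia.
by rewrite inj_start_leqE //; have := @proj_end_gt b.-1; lia.
Qed.

Lemma leq_proj_end_inj_start b : 0 < b <= n -> b <= g (h b).
Proof. by move=> b_range; rewrite -inj_start_leqE. Qed.

Lemma inj_start_mono a b : 0 < a -> a <= b <= n -> h a <= h b.
Proof.
move=> a_gt0 /andP [le_ab le_bn]; rewrite inj_start_leqE; last lia.
by apply: leq_trans (leq_proj_end_inj_start _); lia.
Qed.

Lemma inj_start_le_n b : b <= n -> h b <= n.
Proof.
move=> le_bn; rewrite /h /inj_top.
have := find_size (fun t => b.-1 < t + kup c t) (iota 0 b.-1.+1).
by rewrite size_iota; have := size_gt0; lia.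
Qed.

Lemma size_le_sumn_kup : n <= sumn c.
Proof. by apply/size_le_sumn/allP => x /(nthP 0) [i lt_in <-]; apply: kup_gt0. Qed.

Definition syz_seq p q k := iter k./2 g (if odd k then q else p).

Lemma syz_seqSS p q k : syz_seq p q k.+2 = g (syz_seq p q k).
Proof. by rewrite /syz_seq /= negbK. Qed.

Lemma syz_seq_double p q m : syz_seq p q m.*2 = iter m g p.
Proof. by rewrite /syz_seq odd_double doubleK. Qed.

Lemma syz_seq_doubleS p q m : syz_seq p q m.*2.+1 = iter m g q.
Proof. by rewrite /syz_seq /= odd_double uphalf_double. Qed.

Section SyzygySequence.

Variables p q : nat.
Local Notation s := (syz_seq p q).

Lemma syz_seq_le_n k : p <= n -> q <= n -> s k <= n.
Proof. by move=> le_pn le_qn; rewrite /syz_seq; case: odd; apply: iter_proj_end_le. Qed.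

Lemma syz_seq_grow k : (forall i, i < k -> s i.+1 < s i.+2) -> q + k <= s k.+1.
Proof.
elim: k => [_|k IH incr]; first by rewrite addn0.
by have := IH (fun i lt_ik => incr i (ltnW lt_ik)); have := incr k (ltnSn k); lia.
Qed.

Lemma syz_interval k : p <= q -> (forall i, i < k -> s i.+1 < s i.+2) ->
  syz c k (p, q - p) = Some (s k, s k.+1 - s k).
Proof.
move=> le_pq; elim: k => [//|k IH incr].
rewrite /syz iterS -/(syz c k _) IH => [|i lt_ik]; last by apply: incr; lia.
have le_k : s k <= s k.+1 by case: k {IH} incr => [_|k /(_ k)]; [|lia].
have := incr k (ltnSn k); rewrite /= /omega /= syz_seqSS /g.
by case: ifP => [_ _|]; [congr (Some (_, _)) | ]; lia.
Qed.

Lemma syz_interval_collapse k : p <= q -> (forall i, i < k -> s i.+1 < s i.+2) ->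
  s k.+2 <= s k.+1 -> syz c k.+1 (p, q - p) = None.
Proof.
move=> le_pq incr; rewrite /syz iterS -/(syz c k _) syz_interval //= /omega /=.
by rewrite syz_seqSS /g; case: ifP => //; lia.
Qed.

Lemma pd_interval k : p < n -> p < q <= g p ->
  (forall i, i < k -> s i.+1 < s i.+2) -> s k.+2 <= s k.+1 -> pd c (p, q - p) = k.
Proof.
move=> lt_pn /andP [lt_pq le_qg] incr collapse.
have le_qn : q <= n := leq_trans le_qg (proj_end_le (ltnW lt_pn)).
have lt_k : k < sumn c.
  have := syz_seq_grow incr; have := syz_seq_le_n k.+1 (ltnW lt_pn) le_qn.
  by have := size_le_sumn_kup; lia.
apply: find_iota0 => [//||i lt_ik]; first by rewrite syz_interval_collapse ?(ltnW lt_pq).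
by rewrite syz_interval ?(ltnW lt_pq) // => j lt_ji; apply: incr; lia.
Qed.

End SyzygySequence.

Definition cosyz_seq x k := iter k./2 h (if odd k then x else g x).

Lemma cosyz_seqSS x k : cosyz_seq x k.+2 = h (cosyz_seq x k).
Proof. by rewrite /cosyz_seq /= negbK. Qed.

Section CosyzygySequence.

Variable x : nat.
Hypothesis lt_xn : x < n.
Local Notation w := (cosyz_seq x).

Lemma cosyz_seq_le_n k : w k <= n.
Proof.
rewrite /cosyz_seq; elim: k./2 => /= [|j IH]; last exact: inj_start_le_n.
by case: odd; [exact: ltnW | exact: proj_end_le (ltnW lt_xn)].
Qed.

Lemma cosyz_seq_le k : (forall i, i < k -> w i.+2 < w i.+1) -> w k.+1 <= w k.
Proof. by case: k => [_|k /(_ k (ltnSn k))]; [exact: leq_proj_end | exact: ltnW]. Qed.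

Lemma cosyz_interval k : (forall i, i < k -> w i.+2 < w i.+1) ->
  cosyz_iter c k (x, kup c x) = Some (w k.+1, w k - w k.+1).
Proof.
elim: k => [_|k IH decr]; first by rewrite /cosyz_iter /= /g addKn.
rewrite /cosyz_iter iterS -/(cosyz_iter c k _) IH => [|i lt_ik]; last by apply: decr; lia.
have le_k := cosyz_seq_le (fun i lt_ik => decr i (ltnW lt_ik)).
rewrite /= /cosyz /= subnKC // -/(h _) -cosyz_seqSS.
by have := decr k (ltnSn k); case: ifP => //; lia.
Qed.

Lemma env_interval_proj a b : a <= b -> 0 < b <= n ->
  is_proj c (env c (a, b - a)) = (g (h b) == b).
Proof.
move=> le_ab b_range; rewrite /env /is_proj /= subnKC // -/(h _) prednK; last lia.
have := inj_start_lt b_range; rewrite /g; case: eqP; case: eqP => //; lia.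
Qed.

Lemma domdim_cosyz d j : domdim_ge c d -> j < d ->
  (forall i, i < j -> w i.+2 < w i.+1) -> g (w j.+2) = w j.
Proof.
move=> dom lt_jd decr; have := dom x lt_xn j lt_jd; rewrite cosyz_interval //.
have w_gt0 : 0 < w j.
  case: j {lt_jd} decr => [_ | j /(_ j (ltnSn j))]; last lia.
  exact: leq_ltn_trans (proj_end_gt lt_xn).
by rewrite env_interval_proj ?cosyz_seq_le ?w_gt0 ?cosyz_seq_le_n // cosyz_seqSS => /eqP.
Qed.

End CosyzygySequence.

Lemma proj_end_range y : y < n -> 0 < g y <= n.
Proof. by move=> lt_yn; have := proj_end_gt lt_yn; have := proj_end_le (ltnW lt_yn); lia. Qed.

Lemma inj_start_proj_end_le y : y < n -> h (g y) <= y.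
Proof. by move/proj_end_range=> gy_range; rewrite inj_start_leqE. Qed.

Lemma proj_end_inj_start_proj_end y : y < n -> g (h (g y)) = g y.
Proof.
move=> lt_yn; apply/eqP; rewrite eqn_leq leq_proj_end_inj_start ?proj_end_range // andbT.
exact/proj_end_mono/inj_start_proj_end_le.
Qed.

Definition noninj_top x := [&& 0 < x, x < n & g x.-1 == g x].

Lemma noninj_top_merge a b : a < b -> g a = g b -> b < n -> noninj_top b.
Proof.
move=> lt_ab eq_g lt_bn; rewrite /noninj_top lt_bn eqn_leq proj_end_mono ?leq_pred //=.
by rewrite -eq_g proj_end_mono ?andbT //; lia.
Qed.

Definition noninj_tops := [seq x <- iota 0 n | noninj_top x].

Definition nonproj_inj_ends := [seq b <- iota 1 n | b \notin [seq g y | y <- iota 0 n]].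

Lemma size_nonproj_inj_ends : size nonproj_inj_ends = size noninj_tops.
Proof.
set F := [seq y <- iota 0 n | ~~ noninj_top y].
have size_F : size F + size noninj_tops = n.
  by rewrite !size_filter addnC (count_predC noninj_top) size_iota.
have g_inj : {in F &, injective g}.
  have merge y1 y2 : y1 < y2 -> g y1 = g y2 -> y2 \notin F.
    move=> lt_y eq_g; rewrite mem_filter mem_iota negb_and negbK.
    by case: (ltnP y2 n) => [lt_y2n | ]; [rewrite (noninj_top_merge lt_y eq_g) | rewrite orbT].
  move=> y1 y2 F1 F2 eq_g; case: (ltngtP y1 y2) => // lt_y.
    by move: F2; rewrite (negbTE (merge _ _ lt_y eq_g)).
  by move: F1; rewrite (negbTE (merge _ _ lt_y (esym eq_g))).
have image_F : [seq b <- iota 1 n | b \in [seq g y | y <- iota 0 n]] =i map g F.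
  move=> b; rewrite mem_filter mem_iota; apply/andP/mapP => [[/mapP [y] ] | [y]].
    rewrite mem_iota add0n => lt_yn -> _; exists (h (g y)); last first.
      by rewrite proj_end_inj_start_proj_end.
    have le_y := inj_start_proj_end_le lt_yn.
    rewrite mem_filter mem_iota add0n (leq_ltn_trans le_y lt_yn) leq0n !andbT.
    apply/negP => /and3P [gt0 _ /eqP eq_g].
    suff : h (g y) <= (h (g y)).-1 by lia.
    by rewrite inj_start_leqE ?proj_end_range // eq_g proj_end_inj_start_proj_end.
  rewrite mem_filter mem_iota add0n => /andP [_ lt_yn] ->.
  by rewrite map_f ?mem_iota //; have := proj_end_range lt_yn; lia.
have uniq_gF : uniq (map g F) by rewrite (map_inj_in_uniq g_inj) filter_uniq ?iota_uniq.
have := perm_size (uniq_perm (filter_uniq _ (iota_uniq 1 n)) uniq_gF image_F).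
rewrite size_map size_filter /nonproj_inj_ends size_filter => count_image.
have := count_predC (mem [seq g y | y <- iota 0 n]) (iota 1 n).
by rewrite size_iota count_image -size_F => /addnI.
Qed.

Lemma valid_end_range t l : valid c (t, l) -> 0 < t + l <= n.
Proof.
rewrite /valid /= => /and3P [lt_tn l_gt0 le_l].
by have := proj_end_le (ltnW lt_tn); rewrite /g; lia.
Qed.

Lemma inj_start_inj t l : valid c (t, l) -> is_inj c (t, l) -> h (t + l) = t.
Proof.
move=> valid_I inj_I; have tl_range := valid_end_range valid_I.
have /and3P [_ _ /= le_l] : valid c (t, l) := valid_I.
apply/eqP; rewrite eqn_leq inj_start_leqE // /g leq_add2l le_l /=.
case: t {valid_I le_l} inj_I tl_range => [//|t]; rewrite /is_inj /= => le_kup tl_range.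
by rewrite leqNgt ltnS inj_start_leqE // /g; lia.
Qed.

Lemma nonproj_inj_end_mem t l : valid c (t, l) -> is_inj c (t, l) -> ~~ is_proj c (t, l) ->
  t + l \in nonproj_inj_ends.
Proof.
move=> valid_I inj_I; rewrite /is_proj /= => nproj.
have tl_range := valid_end_range valid_I.
have /and3P [_ _ /= le_l] : valid c (t, l) := valid_I.
rewrite mem_filter mem_iota andbC; apply/andP; split; first lia.
apply/mapP => -[y _ tl_eq].
have : t <= y by rewrite -(inj_start_inj valid_I inj_I) inj_start_leqE // tl_eq.
by move/proj_end_mono; rewrite -tl_eq /g; move: nproj; rewrite neq_ltn; lia.
Qed.

Lemma simple_interval v : simple v = (v, v.+1 - v).
Proof. by rewrite /simple subSnn. Qed.

Section HigherAuslander.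

Variable d : nat.
Hypothesis gldim : forall M, valid c M -> syz c d.+1 M = None.
Hypothesis domdim : domdim_ge c d.
Hypothesis d_even : ~~ odd d.
Hypothesis d_gt0 : 0 < d.

Local Notation r := d./2.

Lemma d_double : d = r.*2.
Proof. by rewrite -[LHS]odd_double_half (negbTE d_even). Qed.

Lemma valid_interval p q : p < n -> p < q <= g p -> valid c (p, q - p).
Proof. by move=> lt_pn /andP [lt_pq]; rewrite /valid /= lt_pn /g; lia. Qed.

Lemma gldim_collapse p q : p < n -> p < q <= g p ->
  exists2 i, i <= d & syz_seq p q i.+2 <= syz_seq p q i.+1.
Proof.
move=> lt_pn q_range; have := gldim (valid_interval lt_pn q_range).
case: (boolP (has (fun i => syz_seq p q i.+2 <= syz_seq p q i.+1) (iota 0 d.+1))).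
  by case/hasP => i; rewrite mem_iota => /andP [_ lt_id] collapse _; exists i.
move/hasPn => incr; rewrite syz_interval // => [|i lt_id]; first by case/andP: q_range; lia.
by rewrite ltnNge; apply: incr; rewrite mem_iota.
Qed.

Lemma pd_interval_first p q : p < n -> p < q <= g p ->
  exists i, [/\ i <= d, pd c (p, q - p) = i, syz_seq p q i.+2 <= syz_seq p q i.+1
    & forall j, j < i -> syz_seq p q j.+1 < syz_seq p q j.+2].
Proof.
move=> lt_pn q_range; have [i0 le_i0d collapse0] := gldim_collapse lt_pn q_range.
have ex_collapse : exists i, syz_seq p q i.+2 <= syz_seq p q i.+1 by exists i0.
have [i collapse min_i] := ex_minnP ex_collapse.
have incr j : j < i -> syz_seq p q j.+1 < syz_seq p q j.+2.
  by move=> lt_ji; rewrite ltnNge; apply/negP => /min_i; lia.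
exists i; split => //; first exact: leq_trans (min_i _ collapse0) le_i0d.
exact: pd_interval.
Qed.

Lemma pd_interval_gldim p q : p < n -> p < q <= g p ->
  (forall i, i < d -> syz_seq p q i.+1 < syz_seq p q i.+2) -> pd c (p, q - p) = d.
Proof.
move=> lt_pn q_range incr; have [i [le_id -> collapse _]] := pd_interval_first lt_pn q_range.
by apply/eqP; rewrite eqn_leq le_id leqNgt; apply/negP => /incr; lia.
Qed.

Section NonInjectiveProjective.

Variable x : nat.
Hypothesis x_noninj : noninj_top x.
Local Notation w := (cosyz_seq x).

Let lt_xn : x < n. Proof. by case/and3P: x_noninj. Qed.

Lemma cosyz_seq_decr i : i <= d -> w i.+1 < w i.
Proof.
elim/ltn_ind: i => -[_ _ | [_ _ | k IH le_kd]]; first exact: proj_end_gt.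
  case/and3P: x_noninj => x_gt0 _ /eqP eq_g; rewrite cosyz_seqSS; change (h (g x) < x).
  suff : h (g x) <= x.-1 by lia.
  by rewrite inj_start_leqE ?proj_end_range // eq_g.
have decr j : j < k.+1 -> w j.+2 < w j.+1 by move=> lt_jk; apply: IH; lia.
have lt_k1d : k.+1 < d by lia.
have g_k1 : g (w k.+3) = w k.+1 := domdim_cosyz lt_xn domdim lt_k1d decr.
have g_k : g (w k.+2) = w k.
  by apply: (domdim_cosyz lt_xn domdim (ltnW lt_k1d)) => j lt_jk; apply: decr; lia.
rewrite ltnNge; apply/negP => /proj_end_mono; rewrite g_k1 g_k.
by have := IH k; lia.
Qed.

Lemma proj_end_cosyz k : k < d -> g (w k.+2) = w k.
Proof.
move=> lt_kd; apply: (domdim_cosyz lt_xn domdim lt_kd) => i lt_ik.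
by apply: cosyz_seq_decr; lia.
Qed.

Lemma cosyz_seq_range k : k <= d -> 0 < w k <= n.
Proof. by move/cosyz_seq_decr; rewrite cosyz_seq_le_n // andbT; lia. Qed.

Lemma iter_proj_end_cosyz m k : m.*2 <= k <= d.+1 -> iter m g (w k) = w (k - m.*2).
Proof.
elim: m => [|m IH] k_range; first by rewrite subn0.
rewrite iterS IH; last by rewrite doubleS in k_range; lia.
have -> : k - m.*2 = (k - m.+1.*2).+2 by rewrite doubleS; lia.
by apply: proj_end_cosyz; rewrite doubleS in k_range; lia.
Qed.

Lemma iter_proj_end_lt_cosyz m k y : m.*2 <= k <= d.+1 -> y < w k ->
  iter m g y < iter m g (w k).
Proof.
elim: m => [//|m IH] k_range lt_y; rewrite doubleS in k_range.
set j := k - m.+1.*2.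
have w_j1 : iter m g (w k) = h (w j).
  by rewrite iter_proj_end_cosyz -?cosyz_seqSS; [congr w; rewrite /j doubleS|]; lia.
have w_j2 : iter m.+1 g (w k) = w j by rewrite iter_proj_end_cosyz // doubleS; lia.
rewrite w_j2 iterS ltnNge -inj_start_leqE ?cosyz_seq_range -?w_j1 -?ltnNge ?IH //; lia.
Qed.

Lemma proj_end_cosyz_last : g (w d.+1) = w d.-1.
Proof. by rewrite -(prednK d_gt0) proj_end_cosyz ?prednK //; lia. Qed.

Lemma cosyz_last_lt_pred : w d < w d.-1.
Proof. by have := @cosyz_seq_decr d.-1; rewrite prednK //; apply; lia. Qed.

Lemma inj_start_cosyz_last : h (w d) = w d.+1.
Proof.
have wd_range := cosyz_seq_range (leqnn d).
have lt_wd := cosyz_seq_decr (leqnn d).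
set p0 := h (w d).
have le_p0 : p0 <= w d.+1.
  by rewrite inj_start_leqE // proj_end_cosyz_last ltnW // cosyz_last_lt_pred.
case: (ltngtP p0 (w d.+1)) le_p0 => // lt_p0 _; exfalso.
have le_g : w d <= g p0 := leq_proj_end_inj_start wd_range.
have lt_p0n : p0 < n by lia.
have wd1_range : p0 < w d.+1 <= g p0 by rewrite lt_p0 (leq_trans (ltnW lt_wd)).
have [i le_id] := gldim_collapse lt_p0n wd1_range.
have [m [i_even | i_odd]] := even_or_odd i; subst i.
  rewrite syz_seqSS syz_seq_double syz_seq_doubleS -iterS iterSr.
  have := iter_proj_end_mono m le_g.
  rewrite !iter_proj_end_cosyz; [|lia|lia].
  have -> : d.+1 - m.*2 = (d - m.*2).+1 by lia.
  by have := @cosyz_seq_decr (d - m.*2) (leq_subr _ _); lia.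
rewrite -doubleS syz_seq_double syz_seq_doubleS.
by have := @iter_proj_end_lt_cosyz m.+1 d.+1 p0; rewrite doubleS; lia.
Qed.

Lemma proj_end_neq_cosyz_last y : g y != w d.
Proof.
apply/eqP => eq_gy; have := cosyz_last_lt_pred.
have : w d.+1 <= y by rewrite -inj_start_cosyz_last inj_start_leqE ?eq_gy ?cosyz_seq_range.
by move/proj_end_mono; rewrite proj_end_cosyz_last eq_gy; lia.
Qed.

Lemma iter_proj_end_cosyz_last : iter r g (w d.+1) = x.
Proof. by rewrite iter_proj_end_cosyz -d_double ?subSnn //; lia. Qed.

Lemma leq_cosyz_odd k y : k <= r -> (w k.*2.+1 <= y) = (x <= iter k g y).
Proof.
elim: k y => [//|k IH] y le_kr.
rewrite doubleS cosyz_seqSS inj_start_leqE ?cosyz_seq_range ?IH ?iterSr //; have := d_double; lia.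
Qed.

Lemma leq_cosyz_even k y : k <= r -> (w k.*2 <= y) = (g x <= iter k g y).
Proof.
elim: k y => [//|k IH] y le_kr.
rewrite doubleS cosyz_seqSS inj_start_leqE ?cosyz_seq_range ?IH ?iterSr //; have := d_double; lia.
Qed.

Lemma cosyz_seq_odd_eq k y : k <= r -> iter k g y < x <= iter k g y.+1 -> w k.*2.+1 = y.+1.
Proof.
move=> le_kr /andP [lt_x le_x]; apply/eqP; rewrite eqn_leq leq_cosyz_odd // le_x /=.
by rewrite ltnNge leq_cosyz_odd // -ltnNge.
Qed.

Lemma syz_seq_cosyz_last i : i <= d.+1 -> syz_seq (w d.+1) (w d) i = w (d.+1 - i).
Proof.
have [m [-> | ->]] := even_or_odd i => le_i.
  by rewrite syz_seq_double iter_proj_end_cosyz //; lia.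
by rewrite syz_seq_doubleS iter_proj_end_cosyz; [congr w|]; lia.
Qed.

Lemma pd_cosyz_last : pd c (w d.+1, w d - w d.+1) = d.
Proof.
have lt_wd := cosyz_seq_decr (leqnn d).
have wd_range := cosyz_seq_range (leqnn d).
apply: pd_interval_gldim => [||i lt_id]; first lia.
  by rewrite lt_wd proj_end_cosyz_last ltnW ?cosyz_last_lt_pred.
rewrite !syz_seq_cosyz_last; [|lia|lia].
by have := @cosyz_seq_decr (d.+1 - i.+2); rewrite -subSn; [apply|]; lia.
Qed.

Lemma iter_cosyz_last_lt m y : m < r -> w d.+1 <= y -> iter m g (w d) < iter m.+1 g y.
Proof.
move=> lt_mr le_y; have := d_double => d_r.
apply: leq_trans (iter_proj_end_mono m.+1 le_y); rewrite !iter_proj_end_cosyz; [|lia|lia].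
have -> : d - m.*2 = (d.+1 - m.+1.*2).+1 by rewrite doubleS; lia.
by apply: cosyz_seq_decr; lia.
Qed.

Lemma iter_cosyz_last_le m y : m <= r -> w d.+1 <= y -> iter m g (w d) <= iter m.+1 g y.
Proof.
rewrite leq_eqVlt => /orP [/eqP -> le_y | lt_mr]; last by move/(iter_cosyz_last_lt lt_mr)/ltnW.
apply: leq_trans (iter_proj_end_mono r.+1 le_y).
by rewrite iterS iter_proj_end_cosyz_last iter_proj_end_cosyz -d_double ?subnn //; lia.
Qed.

Lemma pd_simple_cosyz_last : pd c (simple (w d).-1) = d.
Proof.
have lt_wd := cosyz_seq_decr (leqnn d).
have /andP [wd_gt0 le_wdn] := cosyz_seq_range (leqnn d).
have lt_n : (w d).-1 < n by lia.
rewrite simple_interval; apply: pd_interval_gldim => [||i lt_id]; first by [].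
  by rewrite prednK // leqnn -[X in X <= _](prednK wd_gt0) proj_end_gt.
rewrite prednK //; have [m [i_m | i_m]] := even_or_odd i; subst i.
  rewrite syz_seqSS syz_seq_double syz_seq_doubleS -iterS.
  by apply: iter_cosyz_last_lt; have := d_double; lia.
rewrite -doubleS syz_seq_double syz_seq_doubleS.
by apply: iter_proj_end_lt_cosyz; have := d_double; lia.
Qed.

Lemma pd_simple_odd j : w d.+1 <= j -> j.+1 < w d -> exists m,
  [/\ m < r, pd c (simple j) = m.*2.+1, iter m g j < iter m g j.+1
     & iter m.+1 g j = iter m.+1 g j.+1].
Proof.
move=> le_j lt_j; have le_wdn := cosyz_seq_le_n lt_xn d.
have lt_jn : j < n by lia.
have j_range : j < j.+1 <= g j by rewrite ltnSn proj_end_gt.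
rewrite simple_interval; have [i [le_id -> collapse incr]] := pd_interval_first lt_jn j_range.
have [m [i_m | i_m]] := even_or_odd i; subst i.
  exfalso; move: collapse; rewrite syz_seqSS syz_seq_double syz_seq_doubleS -iterS.
  have := @iter_cosyz_last_le m j; have := @iter_proj_end_lt_cosyz m d j.+1.
  by have := d_double; lia.
move: collapse; rewrite -doubleS syz_seq_double syz_seq_doubleS => collapse.
exists m; split => //; first by have := d_double; lia.
  have : syz_seq j j.+1 m.*2 < syz_seq j j.+1 m.*2.+1.
    case: m {le_id collapse} incr => [_|m incr]; first exact: ltnSn.
    by rewrite doubleS; apply: incr; lia.
  by rewrite syz_seq_double syz_seq_doubleS.
by apply/eqP; rewrite eqn_leq collapse iter_proj_end_mono.
Qed.

End NonInjectiveProjective.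

Lemma cosyz_seq_rigid x x' k : noninj_top x -> noninj_top x' -> k < d ->
  cosyz_seq x' d <= cosyz_seq x k <= cosyz_seq x' d.-1 ->
  cosyz_seq x k = cosyz_seq x' d.-1.
Proof.
move=> x_noninj x'_noninj lt_kd /andP [lo hi].
have h_pred : h (cosyz_seq x' d.-1) = cosyz_seq x' d.+1.
  by rewrite -cosyz_seqSS prednK.
have h_eq : h (cosyz_seq x k) = cosyz_seq x' d.+1.
  have := cosyz_seq_range x'_noninj (leqnn d); have := cosyz_seq_range x'_noninj (leq_pred d).
  move=> /andP [_ le_n] /andP [gt0 _]; apply/eqP; rewrite eqn_leq.
  rewrite -{1}h_pred -(inj_start_cosyz_last x'_noninj) !inj_start_mono ?lo ?hi //; lia.
rewrite -(proj_end_cosyz x_noninj lt_kd) cosyz_seqSS h_eq.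
exact: proj_end_cosyz_last.
Qed.

Lemma nonproj_inj_end_cosyz b : b \in nonproj_inj_ends ->
  exists2 x, noninj_top x & cosyz_seq x d = b.
Proof.
move=> b_in; have noninjP x : x \in noninj_tops -> noninj_top x by rewrite mem_filter => /andP [].
have uniq_ends : uniq [seq cosyz_seq x d | x <- noninj_tops].
  rewrite map_inj_in_uniq ?filter_uniq ?iota_uniq // => x1 x2 /noninjP x1_ni /noninjP x2_ni eq_w.
  rewrite -(iter_proj_end_cosyz_last x1_ni) -(inj_start_cosyz_last x1_ni) eq_w.
  by rewrite inj_start_cosyz_last ?iter_proj_end_cosyz_last.
have sub_ends : {subset [seq cosyz_seq x d | x <- noninj_tops] <= nonproj_inj_ends}.
  move=> _ /mapP [x /noninjP x_ni ->]; have := cosyz_seq_range x_ni (leqnn d).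
  rewrite mem_filter mem_iota => wd_range; apply/and3P; split; [|lia|lia].
  by apply/mapP => -[y _ /eqP]; rewrite eq_sym (negbTE (proj_end_neq_cosyz_last x_ni y)).
have le_size : size nonproj_inj_ends <= size [seq cosyz_seq x d | x <- noninj_tops].
  by rewrite size_map size_nonproj_inj_ends.
have [_ eq_ends] := uniq_min_size uniq_ends sub_ends le_size.
by move: b_in; rewrite -eq_ends => /mapP [x /noninjP x_ni ->]; exists x.
Qed.

Lemma pd_simple_decr x j : noninj_top x -> cosyz_seq x d.+1 <= j -> j.+2 < cosyz_seq x d ->
  pd c (simple j.+1) < pd c (simple j).
Proof.
move=> x_ni le_j lt_j; have d_r := d_double.
have [m [lt_mr -> lt_m merge_m]] := pd_simple_odd x_ni le_j (ltnW lt_j).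
have [m' [lt_m'r -> lt_m' merge_m']] := pd_simple_odd x_ni (leqW le_j) lt_j.
rewrite ltnS ltn_double ltnNge; apply/negP => le_mm'.
have /andP [_ le_wdn] := cosyz_seq_range x_ni (leqnn d).
have below k y : k <= r -> y < cosyz_seq x d -> iter k g y < n.
  move=> le_kr lt_y; apply: leq_trans (iter_proj_end_le k le_wdn).
  by apply: iter_proj_end_lt_cosyz; lia.
set b := iter m g j.+1; set b' := iter m' g j.+2.
have b_ni : noninj_top b.
  by apply: noninj_top_merge lt_m _ (below _ _ _ _); rewrite -?iterS ?merge_m //; lia.
have b'_ni : noninj_top b'.
  by apply: noninj_top_merge lt_m' _ (below _ _ _ _); rewrite -?iterS ?merge_m' //; lia.
have w_b : cosyz_seq b m.*2.+1 = j.+1 by apply: cosyz_seq_odd_eq; rewrite ?lt_m ?leqnn //; lia.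
have w_b' : cosyz_seq b' m'.*2.+1 = j.+2 by apply: cosyz_seq_odd_eq; rewrite ?lt_m' ?leqnn //; lia.
set s := r - m'.+1.
set U := cosyz_seq b (m + s).*2.+1.
have iter_U : iter s g U = j.+1.
  by rewrite (iter_proj_end_cosyz b_ni) -?w_b; [congr (cosyz_seq b _) | ]; rewrite ?doubleD; lia.
have iter_V : iter s g (cosyz_seq b' d.-1) = j.+2.
  by rewrite (iter_proj_end_cosyz b'_ni) -?w_b'; [congr (cosyz_seq b' _) | ]; rewrite ?doubleD; lia.
have lo : cosyz_seq b' d <= U.
  have -> : cosyz_seq b' d = cosyz_seq b' r.*2 by rewrite -d_r.
  rewrite (leq_cosyz_even b'_ni) // (_ : r = m'.+1 + s); last lia.
  by rewrite iterD iter_U merge_m' iterS.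
have hi : U <= cosyz_seq b' d.-1.
  rewrite (leq_cosyz_odd b_ni); last lia.
  by rewrite iterD iter_V iter_proj_end_mono.
have lt_d : (m + s).*2.+1 < d by lia.
have U_range : cosyz_seq b' d <= U <= cosyz_seq b' d.-1 by rewrite lo hi.
by move: iter_U; rewrite /U (cosyz_seq_rigid b_ni b'_ni lt_d U_range) iter_V; lia.
Qed.

Lemma nonproj_inj_pd_charz t l :
  valid c (t, l) -> is_inj c (t, l) -> ~~ is_proj c (t, l) -> 2 <= l ->
  pd c (t, l) = d /\ plus_strictly_increasing c (t, l) /\ head 0 (charz c (t, l)) = d.
Proof.
move=> valid_I inj_I nproj_I le_2l; have d_r := d_double.
have [x x_ni w_d] := nonproj_inj_end_cosyz (nonproj_inj_end_mem valid_I inj_I nproj_I).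
have w_d1 : cosyz_seq x d.+1 = t.
  by rewrite -(inj_start_cosyz_last x_ni) w_d (inj_start_inj valid_I inj_I).
have pd_I : pd c (t, l) = d by rewrite -(pd_cosyz_last x_ni) w_d w_d1 addKn.
have pd_odd i : 2 <= i <= l -> exists2 m, m < r & pd c (simple (t + l - i)) = m.*2.+1.
  move=> i_range; have le_j : cosyz_seq x d.+1 <= t + l - i by rewrite w_d1; lia.
  have lt_j : (t + l - i).+1 < cosyz_seq x d by rewrite w_d; lia.
  by have [m [lt_mr pd_m _ _]] := pd_simple_odd x_ni le_j lt_j; exists m.
have charzE : charz c (t, l) = d :: [seq pd c (simple (t + l - i)) | i <- iota 2 l.-1].
  have iotaE : iota 1 l = 1 :: iota 2 l.-1 by rewrite -[in LHS](prednK (ltnW le_2l)).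
  rewrite /charz /= iotaE /=; congr (_ :: _).
    by rewrite subn1 -w_d (pd_simple_cosyz_last x_ni) (negbTE d_even).
  apply/eq_in_map => i; rewrite mem_iota => i_range.
  by have [|m _ ->] := pd_odd i; [lia | rewrite /= odd_double].
split=> //; rewrite /plus_strictly_increasing charzE /= (negbTE d_even); split=> //.
apply/and4P; split=> //.
- apply/allP => v /mapP [i]; rewrite mem_iota => i_range ->.
  by have [|m _ ->] := pd_odd i; [lia | rewrite /= odd_double].
- apply: sorted_ltn_map_iota => i le_2i lt_il.
  rewrite (_ : t + l - i = (t + l - i.+1).+1); last lia.
  by apply: (pd_simple_decr x_ni); rewrite ?w_d ?w_d1; lia.
- apply/allP => v /mapP [i]; rewrite mem_iota => i_range ->.
  by have [|m lt_mr ->] := pd_odd i; lia.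
Qed.

End HigherAuslander.

End Kupisch.

Theorem proposition8p3 (c : seq nat) (d : nat) (I : module) :
  kupisch_series c -> ~~ odd d -> concave c -> higher_auslander c d ->
  valid c I -> is_inj c I -> ~~ is_proj c I -> 2 <= mlength I ->
  pd c I = d /\ plus_strictly_increasing c I /\ head 0 (charz c I) = d.
Proof.
move=> kupisch d_even _ [[gldim _] [domdim _]]; case: I => t l valid_I inj_I nproj_I le_2l.
have d_gt0 : 0 < d.
  rewrite lt0n; apply/eqP => d0; have := gldim _ valid_I.
  have /and3P [_ _ /= le_l] := valid_I; move: nproj_I; rewrite /is_proj /= => nproj.
  by rewrite d0 /syz /= /omega /= ltn_neqAle nproj le_l.
exact: nonproj_inj_pd_charz.
Qed.
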